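(* For every Hermitian $a\in M_n$ we have $\tau(e^{a}\triangle a)\ge 0$, with equality if and only if $a\in\mathbb{C}1$.
   Context: Let $n\ge 2$, let $m\in\{1,\dots,n-1\}$ be relatively prime to $n$, and set $q=e^{2\pi i m/n}$. Let $M_n$ be the algebra of complex $n\times n$ matrices, with $1$ the identity matrix and $a^*$ the conjugate transpose. Let $u=\mathrm{diag}(1,q,\dots,q^{n-1})$ and let $v$ be the cyclic shift matrix with $v_{j,j+1}=1$ for $j=1,\dots,n-1$, $v_{n,1}=1$, other entries $0$. Let $x,y$ be any Hermitian matrices with $u=e^{\frac{2\pi i}{n}x}$ and $v=e^{\frac{2\pi i}{n}y}$. Define $\delta_1(a)=[y,a]$, $\delta_2(a)=-[x,a]$ and $\triangle=\delta_1^2+\delta_2^2$ on $M_n$. $\tau$ is the usual trace, and $e^a$ is the matrix exponential. *)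

(* complex numbers built on Stdlib Reals (needed for exp, PI,
   limits); complex n x n matrices represented as functions nat -> nat -> Cplx,
   only the entries with indices < n being relevant (indices 0..n-1). *)
From Stdlib Require Import Reals Arith.
Open Scope R_scope.

Record Cplx := mkC { re : R ; im : R }.

Definition C0 : Cplx := mkC 0 0.
Definition C1 : Cplx := mkC 1 0.
Definition Cadd (z w : Cplx) : Cplx := mkC (re z + re w) (im z + im w).
Definition Copp (z : Cplx) : Cplx := mkC (- re z) (- im z).
Definition Cmul (z w : Cplx) : Cplx :=
  mkC (re z * re w - im z * im w) (re z * im w + im z * re w).
Definition Cconj (z : Cplx) : Cplx := mkC (re z) (- im z).
Definition Cexp (z : Cplx) : Cplx := mkC (exp (re z) * cos (im z)) (exp (re z) * sin (im z)).
Fixpoint Cpow (z : Cplx) (k : nat) : Cplx :=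
  match k with O => C1 | S k' => Cmul z (Cpow z k') end.

Fixpoint csum (n : nat) (f : nat -> Cplx) : Cplx :=
  match n with O => C0 | S n' => Cadd (csum n' f) (f n') end.

Definition Mat := nat -> nat -> Cplx.

Definition mid : Mat := fun i j => if Nat.eqb i j then C1 else C0.
Definition mzero : Mat := fun _ _ => C0.
Definition madd (A B : Mat) : Mat := fun i j => Cadd (A i j) (B i j).
Definition mopp (A : Mat) : Mat := fun i j => Copp (A i j).
Definition msub (A B : Mat) : Mat := madd A (mopp B).
Definition mscal (c : Cplx) (A : Mat) : Mat := fun i j => Cmul c (A i j).
Definition mmul (n : nat) (A B : Mat) : Mat :=
  fun i j => csum n (fun k => Cmul (A i k) (B k j)).
Definition madj (A : Mat) : Mat := fun i j => Cconj (A j i).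

Definition meq (n : nat) (A B : Mat) : Prop :=
  forall i j, (i < n)%nat -> (j < n)%nat -> A i j = B i j.

Definition hermitian (n : nat) (A : Mat) : Prop := meq n A (madj A).

Definition trace (n : nat) (A : Mat) : Cplx := csum n (fun i => A i i).

Fixpoint mpow (n : nat) (A : Mat) (k : nat) : Mat :=
  match k with O => mid | S k' => mmul n A (mpow n A k') end.

Fixpoint mexp_partial (n : nat) (A : Mat) (N : nat) : Mat :=
  match N with
  | O => mid
  | S N' => madd (mexp_partial n A N')
                 (mscal (mkC (/ INR (fact N)) 0) (mpow n A N))
  end.

Definition is_mexp (n : nat) (A E : Mat) : Prop :=
  forall i j, (i < n)%nat -> (j < n)%nat ->
    Un_cv (fun N => re (mexp_partial n A N i j)) (re (E i j)) /\
    Un_cv (fun N => im (mexp_partial n A N i j)) (im (E i j)).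

Definition qroot (n m : nat) : Cplx := Cexp (mkC 0 (2 * PI * INR m / INR n)).

Definition umat (n m : nat) : Mat :=
  fun i j => if Nat.eqb i j then Cpow (qroot n m) i else C0.

(* cyclic shift: v_{j,j+1} = 1, v_{n-1,0} = 1 (0-based indices) *)
Definition vmat (n : nat) : Mat :=
  fun i j => if Nat.eqb j (Nat.modulo (S i) n) then C1 else C0.

Definition twopi_i_over (n : nat) : Cplx := mkC 0 (2 * PI / INR n).

Definition comm (n : nat) (A B : Mat) : Mat := msub (mmul n A B) (mmul n B A).

Definition delta1 (n : nat) (y a : Mat) : Mat := comm n y a.
Definition delta2 (n : nat) (x a : Mat) : Mat := mopp (comm n x a).
Definition laplacian (n : nat) (x y a : Mat) : Mat :=
  madd (delta1 n y (delta1 n y a)) (delta2 n x (delta2 n x a)).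

(* Diagonalize a = P^* diag(r) P with P unitary and r real; the exponential
   series of a then converges to P^* diag(e^r) P.  For Hermitian X, writing
   B = P X P^*, one computes
       tr(e^a [X, [X, a]]) = sum_{i,j} |B_ij|^2 (e^{r_i} - e^{r_j}) (r_i - r_j),
   which is >= 0 because exp is increasing, and vanishes only if B_ij = 0 whenever
   r_i <> r_j, i.e. only if X commutes with a.  So the trace vanishes iff a commutes
   with x and y; then a commutes with the partial exponential sums of (2πi/n) x and
   (2πi/n) y, hence with their limits u and v.  As gcd(m, n) = 1 the diagonal entries
   1, q, ..., q^(n-1) of u are distinct, so a is diagonal, and commuting with the
   cyclic shift v makes its diagonal constant. *)

From Pilot Require Import Defs.
From Stdlib Require Import Reals Arith Lra Lia ZArith.
From mathcomp Require all_boot all_order all_algebra Rstruct complex ring.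
Open Scope R_scope.

Lemma Cpow_qroot (n m k : nat) :
  Cpow (qroot n m) k =
  mkC (cos (INR k * (2 * PI * INR m / INR n))) (sin (INR k * (2 * PI * INR m / INR n))).
Proof.
  set (th := 2 * PI * INR m / INR n).
  induction k as [|k IH].
  - simpl. rewrite Rmult_0_l, cos_0, sin_0. reflexivity.
  - change (Cpow (qroot n m) (S k)) with (Cmul (qroot n m) (Cpow (qroot n m) k)).
    rewrite IH. unfold qroot, Cexp, Cmul. cbn [re im]. rewrite exp_0, !Rmult_1_l.
    fold th. rewrite S_INR.
    replace ((INR k + 1) * th) with (th + INR k * th) by ring.
    rewrite cos_plus, sin_plus. f_equal; ring.
Qed.

Lemma same_point_on_circle (a b : R) :
  cos a = cos b -> sin a = sin b -> exists k : Z, b - a = 2 * IZR k * PI.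
Proof.
  intros Ec Es.
  set (s := (b - a) / 2).
  assert (Hc : cos (2 * s) = 1).
  { replace (2 * s) with (b - a) by (unfold s; field).
    rewrite cos_minus, <- Ec, <- Es.
    pose proof (sin2_cos2 a) as H. unfold Rsqr in H. lra. }
  rewrite cos_2a_sin in Hc.
  assert (Hs : sin s = 0) by nra.
  destruct (sin_eq_0_0 s Hs) as [k Hk].
  exists k. unfold s in Hk. lra.
Qed.

Lemma qroot_pow_inj (n m i j : nat) : Nat.gcd m n = 1%nat ->
  (i < j)%nat -> (j < n)%nat -> Cpow (qroot n m) i <> Cpow (qroot n m) j.
Proof.
  intros Hg Hij Hj E.
  rewrite !Cpow_qroot in E. injection E as Ec Es.
  destruct (same_point_on_circle _ _ Ec Es) as [k Hk].
  assert (Hn0 : 0 < INR n) by (apply lt_0_INR; lia).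
  pose proof PI_RGT_0 as Hpi.
  assert (Hk2 : INR (j - i) * INR m = IZR k * INR n).
  { rewrite minus_INR by lia.
    apply Rmult_eq_reg_r with (2 * PI / INR n); [|apply Rgt_not_eq; apply Rdiv_lt_0_compat; lra].
    rewrite <- Rmult_minus_distr_r in Hk.
    replace (IZR k * INR n * (2 * PI / INR n)) with (2 * IZR k * PI) by (field; lra).
    rewrite <- Hk. field. lra. }
  rewrite <- mult_INR, INR_IZR_INZ, INR_IZR_INZ, <- mult_IZR in Hk2.
  apply eq_IZR in Hk2.
  assert (Hk0 : (0 <= k)%Z) by nia.
  assert (Hdiv : Nat.divide n (m * (j - i))) by (exists (Z.to_nat k); lia).
  apply Nat.gauss in Hdiv; [|rewrite Nat.gcd_comm; exact Hg].
  destruct Hdiv as [t Ht]. destruct t; lia.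
Qed.


Lemma exp_diff_mul_pos (s t : R) : s <> t -> 0 < (exp s - exp t) * (s - t).
Proof.
  intros ne. destruct (Rtotal_order s t) as [h|[h|h]]; try contradiction;
  pose proof (exp_increasing _ _ h); nra.
Qed.

Lemma weighted_exp_gap_nonneg (a b s t : R) :
  0 <= (a * a + b * b) * ((exp s - exp t) * (s - t)).
Proof.
  apply Rmult_le_pos; [nra|].
  destruct (Req_dec s t) as [->|ne]; [nra|].
  apply Rlt_le, exp_diff_mul_pos, ne.
Qed.

Lemma weighted_exp_gap_eq0 (a b s t : R) :
  (a * a + b * b) * ((exp s - exp t) * (s - t)) = 0 -> (a = 0 /\ b = 0) \/ s = t.
Proof.
  intros h. destruct (Req_dec s t) as [e|ne]; [now right|left].
  pose proof (exp_diff_mul_pos s t ne).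
  destruct (Rmult_integral _ _ h); nra.
Qed.

Module MatrixModel.
Import all_boot all_order all_algebra Rstruct complex ring.
Import GRing.Theory Num.Theory.
Local Open Scope ring_scope.
Local Open Scope sesquilinear_scope.
Set Implicit Arguments.
Unset Strict Implicit.

Section DoubleCommutator.
Variables (F : comPzRingType) (N : nat).

Definition double_comm (X A : 'M[F]_N) : 'M[F]_N :=
  X *m (X *m A - A *m X) - (X *m A - A *m X) *m X.

Lemma mxtrace_diag_double_comm (f d : 'I_N -> F) (B : 'M[F]_N) :
  \tr (diag_mx (\row_i f i) *m double_comm B (diag_mx (\row_i d i))) =
  \sum_i \sum_j (B i j * B j i) * (f i - f j) * (d i - d j).
Proof.
set C := B *m diag_mx (\row_i d i) - diag_mx (\row_i d i) *m B.
have eC i j : C i j = B i j * (d j - d i).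
  by rewrite /C mul_mx_diag mul_diag_mx !mxE; ring.
set S := \sum_i \sum_j (B i j * B j i * f i * (d i - d j)).
have trS : \tr (diag_mx (\row_i f i) *m double_comm B (diag_mx (\row_i d i))) = S *+ 2.
  rewrite /double_comm -/C mul_diag_mx /mxtrace /S -sumrMnl; apply: eq_bigr => i _.
  rewrite !mxE -sumrB mulr_sumr -sumrMnl; apply: eq_bigr => j _.
  by rewrite !eC; ring.
have swapS : \sum_i \sum_j (B i j * B j i * f j * (d i - d j)) = - S.
  rewrite exchange_big /= /S -sumrN; apply: eq_bigr => i _.
  by rewrite -sumrN; apply: eq_bigr => j _; ring.
rewrite trS (_ : \sum_i \sum_j _ = S - \sum_i \sum_j (B i j * B j i * f j * (d i - d j))).
  by rewrite swapS opprK mulr2n.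
by rewrite /S -sumrB; apply: eq_bigr => i _; rewrite -sumrB; apply: eq_bigr => j _; ring.
Qed.

Lemma double_comm_scalar (X : 'M[F]_N) (c : F) : double_comm X c%:M = 0.
Proof. by rewrite /double_comm scalar_mxC subrr mulmx0 mul0mx subrr. Qed.

End DoubleCommutator.

Section ChangeOfBasis.
Variables (F : comPzRingType) (N : nat) (P Q : 'M[F]_N).
Hypothesis PQ : P *m Q = 1%:M.

Definition basechange (M : 'M[F]_N) : 'M[F]_N := Q *m M *m P.

Lemma basechangeM M M' : basechange M *m basechange M' = basechange (M *m M').
Proof. by rewrite /basechange !mulmxA -[Q *m M *m P *m Q]mulmxA PQ mulmx1. Qed.

Lemma basechangeB M M' : basechange (M - M') = basechange M - basechange M'.
Proof. by rewrite /basechange mulmxBr mulmxBl. Qed.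

Lemma basechange_double_comm M M' :
  double_comm (basechange M) (basechange M') = basechange (double_comm M M').
Proof. by rewrite /double_comm !basechangeM -!basechangeB !basechangeM -basechangeB. Qed.

Lemma mxtrace_basechange M : \tr (basechange M) = \tr M.
Proof. by rewrite /basechange mxtrace_mulC mulmxA PQ mul1mx. Qed.

Lemma basechangeK M : basechange (P *m M *m Q) = M.
Proof.
have QP := mulmx1C PQ.
by rewrite /basechange !mulmxA QP mul1mx -mulmxA QP mulmx1.
Qed.

Lemma basechange_diagE (v : 'I_N -> F) i j :
  basechange (diag_mx (\row_l v l)) i j = \sum_l Q i l * v l * P l j.
Proof. by rewrite /basechange mxE; apply: eq_bigr => l _; rewrite mul_mx_diag !mxE. Qed.

Lemma basechange_diagM (v w : 'I_N -> F) :
  basechange (diag_mx (\row_l v l)) *m basechange (diag_mx (\row_l w l)) =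
  basechange (diag_mx (\row_l (v l * w l))).
Proof.
rewrite basechangeM mulmx_diag; congr (basechange (diag_mx _)).
by apply/rowP => l; rewrite !mxE.
Qed.

End ChangeOfBasis.

Notation K := (complex R).
Notation cRe := (@complex.Re R).
Notation cIm := (@complex.Im R).

Definition toC (z : Cplx) : K := Complex (re z) (im z).
Definition toM (n : nat) (A : Mat) : 'M[K]_n := \matrix_(i, j) toC (A i j).
Definition rC (x : R) : K := Complex x 0.

Lemma toC_inj z w : toC z = toC w -> z = w.
Proof. by case: z w => [a b] [c d] [/= -> ->]. Qed.

Lemma toC_csum n f : toC (csum n f) = \sum_(i < n) toC (f i).
Proof. by elim: n => [|n IH] /=; rewrite ?big_ord0 // big_ord_recr -IH. Qed.

Lemma Nat_eqbE (a b : nat) : Nat.eqb a b = (a == b).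
Proof. by case: (Nat.eqb_spec a b) => [->|/eqP/negbTE ->]; rewrite ?eqxx. Qed.

Lemma toM_mul n A B : toM n (mmul n A B) = toM n A *m toM n B.
Proof. by apply/matrixP => i j; rewrite !mxE toC_csum; apply: eq_bigr => k _; rewrite !mxE. Qed.

Lemma toM_add n A B : toM n (madd A B) = toM n A + toM n B.
Proof. by apply/matrixP => i j; rewrite !mxE. Qed.

Lemma toM_opp n A : toM n (mopp A) = - toM n A.
Proof. by apply/matrixP => i j; rewrite !mxE. Qed.

Lemma toM_scal n c A : toM n (mscal c A) = toC c *: toM n A.
Proof. by apply/matrixP => i j; rewrite !mxE. Qed.

Lemma toM_mid n : toM n mid = 1%:M.
Proof.
apply/matrixP => i j; rewrite !mxE /mid Nat_eqbE.
by rewrite (_ : (nat_of_ord i == j) = (i == j)) //; case: (i == j).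
Qed.

Lemma toM_comm n A B : toM n (Defs.comm n A B) = toM n A *m toM n B - toM n B *m toM n A.
Proof. by rewrite /Defs.comm /msub toM_add toM_opp !toM_mul. Qed.

Lemma toM_laplacian n x y a :
  toM n (laplacian n x y a) = double_comm (toM n y) (toM n a) + double_comm (toM n x) (toM n a).
Proof.
rewrite /laplacian /delta1 /delta2 toM_add !toM_opp !toM_comm !toM_opp !toM_comm.
by rewrite /double_comm mulmxN mulNmx opprK opprD opprK addrC.
Qed.

Lemma toM_pow n A k : toM n.+1 (mpow n.+1 A k) = toM n.+1 A ^+ k.
Proof. by elim: k => [|k IH] /=; rewrite ?toM_mid // toM_mul IH exprS mulmxE. Qed.

Lemma toM_mexp_partial n A N :
  toM n.+1 (mexp_partial n.+1 A N) =
  \sum_(k < N.+1) rC (/ INR (fact k)) *: toM n.+1 A ^+ k.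
Proof.
elim: N => [|N IH]; first by rewrite /= big_ord1 toM_mid expr0 /= Rinv_1 scale1r.
change (mexp_partial n.+1 A N.+1) with
  (madd (mexp_partial n.+1 A N) (mscal (mkC (/ INR (fact N.+1)) 0) (mpow n.+1 A N.+1))).
by rewrite toM_add IH toM_scal toM_pow [in RHS]big_ord_recr.
Qed.

Lemma ord_ltP (n : nat) (i : 'I_n) : (nat_of_ord i < n)%coq_nat.
Proof. by apply/ssrnat.ltP; exact: ltn_ord. Qed.

Lemma toM_meq n A B : meq n A B <-> toM n A = toM n B.
Proof.
split=> [h | /matrixP h i j /ssrnat.ltP hi /ssrnat.ltP hj].
  by apply/matrixP => i j; rewrite !mxE h //; exact: ord_ltP.
by have := h (Ordinal hi) (Ordinal hj); rewrite !mxE; exact: toC_inj.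
Qed.

Lemma toM_hermitian (n : nat) (A : Mat) : Defs.hermitian n A -> (toM n A)^t* = toM n A.
Proof.
by move=> /toM_meq {2}->; apply/matrixP => i j; rewrite !mxE.
Qed.

Lemma toC_trace n A : toC (trace n A) = \tr (toM n A).
Proof. by rewrite /trace toC_csum; apply: eq_bigr => i _; rewrite mxE. Qed.

Definition cv_cplx (s : nat -> K) (L : K) :=
  Un_cv (fun N => cRe (s N)) (cRe L) /\ Un_cv (fun N => cIm (s N)) (cIm L).

Lemma Un_cv_const (c : R) : Un_cv (fun _ => c) c.
Proof. by move=> eps he; exists 0%N => k _; rewrite /R_dist Rminus_diag Rabs_R0. Qed.

Lemma cv_cplx_ext s t L : cv_cplx s L -> (forall N, s N = t N) -> cv_cplx t L.
Proof.
by move=> [h1 h2] e; split; [apply: (Un_cv_ext _ _ _ _ h1) | apply: (Un_cv_ext _ _ _ _ h2)];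
  move=> N /=; rewrite e.
Qed.

Lemma cv_cplx_unique s L1 L2 : cv_cplx s L1 -> cv_cplx s L2 -> L1 = L2.
Proof.
case: L1 L2 => [a b] [c d] [h1 h2] [h3 h4].
by rewrite /= in h1 h2 h3 h4; rewrite (UL_sequence _ _ _ h1 h3) (UL_sequence _ _ _ h2 h4).
Qed.

Lemma cv_cplx_const c : cv_cplx (fun _ => c) c.
Proof. by split; apply: Un_cv_const. Qed.

Lemma cv_cplx_add s t L M :
  cv_cplx s L -> cv_cplx t M -> cv_cplx (fun N => s N + t N) (L + M).
Proof.
move: L M => [a b] [c d] [h1 h2] [h3 h4]; split.
- apply: (Un_cv_ext _ _ _ _ (CV_plus _ _ _ _ h1 h3)) => N; by case: (s N) (t N) => [? ?] [? ?].
- apply: (Un_cv_ext _ _ _ _ (CV_plus _ _ _ _ h2 h4)) => N; by case: (s N) (t N) => [? ?] [? ?].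
Qed.

Lemma cv_cplx_mul s t L M :
  cv_cplx s L -> cv_cplx t M -> cv_cplx (fun N => s N * t N) (L * M).
Proof.
move: L M => [a b] [c d] [h1 h2] [h3 h4]; split.
- apply: (Un_cv_ext _ _ _ _ (CV_minus _ _ _ _ (CV_mult _ _ _ _ h1 h3) (CV_mult _ _ _ _ h2 h4))).
  by move=> N; case: (s N) (t N) => [? ?] [? ?].
- apply: (Un_cv_ext _ _ _ _ (CV_plus _ _ _ _ (CV_mult _ _ _ _ h1 h4) (CV_mult _ _ _ _ h2 h3))).
  by move=> N; case: (s N) (t N) => [? ?] [? ?].
Qed.

Lemma cv_cplx_sum (I : Type) (r : seq I) (s : I -> nat -> K) (L : I -> K) :
  (forall k, cv_cplx (s k) (L k)) ->
  cv_cplx (fun N => \sum_(k <- r) s k N) (\sum_(k <- r) L k).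
Proof.
move=> h; elim: r => [|a r IH].
  by rewrite big_nil; apply: (cv_cplx_ext (cv_cplx_const 0)) => N; rewrite big_nil.
by rewrite big_cons; apply: (cv_cplx_ext (cv_cplx_add (h a) IH)) => N; rewrite big_cons.
Qed.

Lemma cv_cplx_real (s : nat -> R) l : Un_cv s l -> cv_cplx (fun N => rC (s N)) (rC l).
Proof. by move=> h; split => //=; apply: Un_cv_const. Qed.

Lemma is_mexp_cv_cplx n A E : is_mexp n A E ->
  forall i j : 'I_n, cv_cplx (fun N => toM n (mexp_partial n A N) i j) (toM n E i j).
Proof.
move=> h i j; have [h1 h2] := h i j (ord_ltP i) (ord_ltP j).
by split; rewrite mxE; [apply: (Un_cv_ext _ _ _ _ h1) | apply: (Un_cv_ext _ _ _ _ h2)];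
  move=> N; rewrite mxE.
Qed.

(* Matrix products with a fixed matrix are continuous, so commutation passes to limits. *)
Lemma comm_mx_limit N (S : nat -> 'M[K]_N) (U A : 'M[K]_N) :
  (forall i j, cv_cplx (fun k => S k i j) (U i j)) ->
  (forall k, S k *m A = A *m S k) -> U *m A = A *m U.
Proof.
move=> hS hc; apply/matrixP => i j; rewrite !mxE.
have cvUA : cv_cplx (fun k => (S k *m A) i j) (\sum_l U i l * A l j).
  apply: (cv_cplx_ext (cv_cplx_sum _ (fun l => cv_cplx_mul (hS i l) (cv_cplx_const (A l j))))).
  by move=> k; rewrite mxE.
have cvAU : cv_cplx (fun k => (S k *m A) i j) (\sum_l A i l * U l j).
  apply: (cv_cplx_ext (cv_cplx_sum _ (fun l => cv_cplx_mul (cv_cplx_const (A i l)) (hS l j)))).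
  by move=> k; rewrite hc mxE.
exact: cv_cplx_unique cvUA cvAU.
Qed.

Lemma hermitian_unitary_diag (N : nat) (A : 'M[K]_N) : A^t* = A ->
  exists (P : 'M[K]_N) (r : 'I_N -> R),
    P *m P^t* = 1%:M /\ A = basechange P (P^t*) (diag_mx (\row_i rC (r i))).
Proof.
move=> hA.
have Aherm : A \is hermsymmx by apply/is_hermitianmxP; rewrite expr0 scale1r hA.
have /orthomx_spectralP eA := hermitian_normalmx Aherm.
have /unitarymxP Punit := spectral_unitarymx A.
have /mxOverP real_diag := hermitian_spectral_diag_real Aherm.
exists (spectralmx A), (fun i => cRe (spectral_diag A 0 i)); split => //.
rewrite [LHS]eA invmx_unitary; last exact/unitarymxP.
congr (_ *m diag_mx _ *m _); apply/rowP => i; rewrite mxE.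
by move: (real_diag 0 i); case: (spectral_diag A 0 i) => a b; rewrite complex_real => /eqP ->.
Qed.

Lemma rCD x y : rC (x + y) = rC x + rC y.
Proof. by apply/eqP; rewrite eq_complex /= addr0 !eqxx. Qed.

Lemma rCM x y : rC (x * y) = rC x * rC y.
Proof. by apply/eqP; rewrite eq_complex /= !mulr0 !mul0r subr0 addr0 !eqxx. Qed.

Lemma rC_sum (I : Type) (s : seq I) (F : I -> R) :
  rC (\sum_(i <- s) F i) = \sum_(i <- s) rC (F i).
Proof. exact: (big_morph rC rCD (erefl _)). Qed.

(* The contribution of the pair (i, j) to tr(e^a [X, [X, a]]) computed in an
   eigenbasis of a: s = r_i and t = r_j are eigenvalues of a and z is the (i, j)
   entry of X in that basis. *)
Definition spectral_gap (z : K) (s t : R) : R :=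
  (cRe z * cRe z + cIm z * cIm z) * ((exp s - exp t) * (s - t)).

Lemma spectral_gap_ge0 z s t : 0 <= spectral_gap z s t.
Proof. exact/RleP/weighted_exp_gap_nonneg. Qed.

Lemma spectral_gap_eq0 z s t : spectral_gap z s t = 0 -> z = 0 \/ s = t.
Proof.
case/weighted_exp_gap_eq0 => [[a0 b0]|]; last by right.
by left; case: z a0 b0 => /= ? ? -> ->.
Qed.

Lemma spectral_gapE z s t :
  z * z^* * (rC (exp s) - rC (exp t)) * (rC s - rC t) = rC (spectral_gap z s t).
Proof.
case: z => a b; apply/eqP; rewrite /spectral_gap eq_complex /= ?RmultE ?RplusE ?RminusE ?RoppE.
by apply/andP; split; apply/eqP; ring.
Qed.

Lemma comm_diag_of_gaps_eq0 N (B : 'M[K]_N) (r : 'I_N -> R) :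
  \sum_i \sum_j spectral_gap (B i j) (r i) (r j) = 0 ->
  B *m diag_mx (\row_i rC (r i)) = diag_mx (\row_i rC (r i)) *m B.
Proof.
move=> gaps0; apply/matrixP => i j; rewrite mul_mx_diag mul_diag_mx !mxE.
have gap_ge0 k l : (true : bool) -> 0 <= spectral_gap (B k l) (r k) (r l).
  by move=> _; apply: spectral_gap_ge0.
have row0 := psumr_eq0P (fun k _ => sumr_ge0 _ (gap_ge0 k)) gaps0 (i:=i) isT.
case: (spectral_gap_eq0 (psumr_eq0P (gap_ge0 i) row0 (i:=j) isT)) => [->|->].
  by rewrite mulr0 mul0r.
by rewrite mulrC.
Qed.

Section SpectralTrace.
Variables (N : nat) (P : 'M[K]_N).
Hypothesis P_unitary : P *m P^t* = 1%:M.

Lemma mxtrace_exp_double_comm (r : 'I_N -> R) (X : 'M[K]_N) : X^t* = X ->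
  \tr (basechange P (P^t*) (diag_mx (\row_i rC (exp (r i)))) *m
       double_comm X (basechange P (P^t*) (diag_mx (\row_i rC (r i))))) =
  rC (\sum_i \sum_j spectral_gap ((P *m X *m P^t*) i j) (r i) (r j)).
Proof.
move=> hX; set B := P *m X *m P^t*.
have Bherm i j : B j i = (B i j)^*.
  have : B^t* = B by rewrite /B !trmx_mul !map_mxM trmxCK hX mulmxA.
  by move/matrixP/(_ j i); rewrite !mxE.
rewrite -{1}(basechangeK P_unitary X) -/B basechange_double_comm //.
rewrite (basechangeM P_unitary) mxtrace_basechange // mxtrace_diag_double_comm /=.
rewrite rC_sum; apply: eq_bigr => i _.
by rewrite rC_sum; apply: eq_bigr => j _; rewrite (Bherm i j) spectral_gapE.
Qed.

Lemma comm_of_spectral_gaps_eq0 (r : 'I_N -> R) (X : 'M[K]_N) :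
  \sum_i \sum_j spectral_gap ((P *m X *m P^t*) i j) (r i) (r j) = 0 ->
  X *m basechange P (P^t*) (diag_mx (\row_i rC (r i))) =
  basechange P (P^t*) (diag_mx (\row_i rC (r i))) *m X.
Proof.
move=> /comm_diag_of_gaps_eq0 BD.
by rewrite -(basechangeK P_unitary X) !(basechangeM P_unitary) BD.
Qed.

End SpectralTrace.

Lemma rC_exp_partial (t : R) N :
  \sum_(k < N.+1) rC (/ INR (fact k)) * rC t ^+ k = rC (E1 t N).
Proof.
elim: N => [|N IH]; first by rewrite big_ord1 expr0 mulr1 /E1 /= Rmult_1_r.
rewrite big_ord_recr IH /E1 /= -/(E1 t N) rCD rCM; congr (_ + _ * _).
change (Rmult t (pow t N)) with (pow t N.+1); elim: N.+1 => [|k IHk] //.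
by rewrite exprS IHk -rCM.
Qed.

Section Exponential.
Variables (n : nat) (P : 'M[K]_n.+1).
Hypothesis P_unitary : P *m P^t* = 1%:M.

Lemma basechange_diagX (v : 'I_n.+1 -> K) k :
  basechange P (P^t*) (diag_mx (\row_l v l)) ^+ k =
  basechange P (P^t*) (diag_mx (\row_l v l ^+ k)).
Proof.
elim: k => [|k IH].
  rewrite expr0 (_ : diag_mx _ = 1%:M); last by apply/matrixP => i j; rewrite !mxE expr0.
  by rewrite /basechange mulmx1 (mulmx1C P_unitary).
rewrite exprS IH -mulmxE basechange_diagM //; congr (basechange _ _ (diag_mx _)).
by apply/rowP => l; rewrite !mxE exprS.
Qed.

Lemma mexp_diagonalized (a Ea : Mat) (r : 'I_n.+1 -> R) :
  toM n.+1 a = basechange P (P^t*) (diag_mx (\row_l rC (r l))) -> is_mexp n.+1 a Ea ->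
  toM n.+1 Ea = basechange P (P^t*) (diag_mx (\row_l rC (exp (r l)))).
Proof.
move=> ha hE; apply/matrixP => i j.
apply: (cv_cplx_unique (is_mexp_cv_cplx hE i j)); rewrite basechange_diagE.
apply: (cv_cplx_ext (cv_cplx_sum _ (fun l => cv_cplx_mul (cv_cplx_mul
  (cv_cplx_const ((P^t*) i l)) (cv_cplx_real (E1_cvg (r l)))) (cv_cplx_const (P l j))))).
move=> N /=; rewrite toM_mexp_partial ha summxE.
under [in RHS]eq_bigr => k _ do
  rewrite basechange_diagX mxE (basechange_diagE _ _ (fun l => rC (r l) ^+ k)) mulr_sumr.
rewrite [RHS]exchange_big /=; apply: eq_bigr => l _.
by rewrite -rC_exp_partial mulr_sumr mulr_suml; apply: eq_bigr => k _; ring.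
Qed.

End Exponential.

Lemma mexp_comm n (X A E : Mat) (c : Cplx) :
  toM n.+1 X *m toM n.+1 A = toM n.+1 A *m toM n.+1 X ->
  is_mexp n.+1 (mscal c X) E -> toM n.+1 E *m toM n.+1 A = toM n.+1 A *m toM n.+1 E.
Proof.
move=> XA hE; apply: (comm_mx_limit (is_mexp_cv_cplx hE)) => N.
rewrite toM_mexp_partial !mulmxE; apply/esym/commr_sum => k _.
rewrite /GRing.comm -scalerAl -scalerAr; congr (_ *: _).
apply/commrX; rewrite /GRing.comm toM_scal -!mulmxE -scalemxAl -scalemxAr.
by rewrite XA.
Qed.

Lemma toM_umat N m : toM N (umat N m) = diag_mx (\row_i toC (Cpow (qroot N m) i)).
Proof.
apply/matrixP => k l; rewrite !mxE /umat Nat_eqbE.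
by rewrite (_ : (nat_of_ord k == l) = (k == l)) //; case: eqP => [->|_]; rewrite ?mulr1n ?mulr0n.
Qed.

Lemma comm_umat_diag N m (A : 'M[K]_N) : Nat.gcd m N = 1%N ->
  toM N (umat N m) *m A = A *m toM N (umat N m) -> A = diag_mx (\row_i A i i).
Proof.
move=> hg; rewrite toM_umat mul_diag_mx mul_mx_diag => /matrixP uA.
apply/matrixP => i j; rewrite !mxE; have [<-|ij] := eqVneq i j; first by rewrite mulr1n.
have q_ne : toC (Cpow (qroot N m) i) != toC (Cpow (qroot N m) j).
  apply/negP => /eqP /toC_inj q_eq.
  have [lt|gt|eq] := ltngtP i j.
  - exact: qroot_pow_inj hg (ssrnat.ltP lt) (ord_ltP j) q_eq.
  - exact: qroot_pow_inj hg (ssrnat.ltP gt) (ord_ltP i) (esym q_eq).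
  - by move: ij; rewrite (val_inj eq) eqxx.
move: (uA i j); rewrite !mxE mulrC => /eqP; rewrite -subr_eq0 -mulrBr mulf_eq0 subr_eq0.
by rewrite (negbTE q_ne) orbF mulr0n => /eqP.
Qed.

Lemma comm_vmat_diag_scalar n (d : 'I_n.+1 -> K) :
  toM n.+1 (vmat n.+1) *m diag_mx (\row_i d i) = diag_mx (\row_i d i) *m toM n.+1 (vmat n.+1) ->
  diag_mx (\row_i d i) = (d ord0)%:M.
Proof.
rewrite mul_mx_diag mul_diag_mx => /matrixP vd.
suff d_const k (hk : (k < n.+1)%N) : d (Ordinal hk) = d ord0.
  by apply/matrixP => i j; rewrite !mxE; case: i => k hk; rewrite d_const.
elim: k hk => [|k IH] hk; first by congr d; apply: val_inj.
have hk' : (k < n.+1)%N by apply: ltnW.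
move: (vd (Ordinal hk') (Ordinal hk)); rewrite !mxE /vmat.
rewrite Nat.mod_small; last exact/ssrnat.ltP.
by rewrite Nat_eqbE eqxx /= mulr1 mul1r => ->; rewrite IH.
Qed.

Lemma commutant_umat_vmat n m (A : 'M[K]_n.+1) : Nat.gcd m n.+1 = 1%N ->
  toM n.+1 (umat n.+1 m) *m A = A *m toM n.+1 (umat n.+1 m) ->
  toM n.+1 (vmat n.+1) *m A = A *m toM n.+1 (vmat n.+1) -> A = (A ord0 ord0)%:M.
Proof.
move=> hg uA vA; have Adiag := comm_umat_diag hg uA.
rewrite Adiag in vA; rewrite Adiag comm_vmat_diag_scalar //.
by rewrite !mxE eqxx mulr1n.
Qed.

Lemma trace_exp_laplacian_spectral n (x y a Ea : Mat) :
  Defs.hermitian n.+1 x -> Defs.hermitian n.+1 y ->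
  Defs.hermitian n.+1 a -> is_mexp n.+1 a Ea ->
  exists S : R,
    re (trace n.+1 (mmul n.+1 Ea (laplacian n.+1 x y a))) = S /\
    im (trace n.+1 (mmul n.+1 Ea (laplacian n.+1 x y a))) = 0 /\ Rle 0 S /\
    (S = 0 -> toM n.+1 x *m toM n.+1 a = toM n.+1 a *m toM n.+1 x /\
              toM n.+1 y *m toM n.+1 a = toM n.+1 a *m toM n.+1 y).
Proof.
move=> hx hy ha hE.
have [P [r [Punit eA]]] := hermitian_unitary_diag (toM_hermitian ha).
pose gaps X := \sum_i \sum_j spectral_gap ((P *m toM n.+1 X *m P^t*) i j) (r i) (r j).
have gaps_ge0 X : 0 <= gaps X.
  by apply: sumr_ge0 => i _; apply: sumr_ge0 => j _; apply: spectral_gap_ge0.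
have eT : toC (trace n.+1 (mmul n.+1 Ea (laplacian n.+1 x y a))) = rC (gaps y + gaps x).
  rewrite toC_trace toM_mul toM_laplacian mulmxDr mxtraceD (mexp_diagonalized Punit eA hE) eA.
  by rewrite !mxtrace_exp_double_comm ?toM_hermitian // rCD.
exists (gaps y + gaps x); split; first exact: (congr1 cRe eT).
split; first exact: (congr1 cIm eT).
split; first by apply/RleP; rewrite addr_ge0.
move=> /eqP; rewrite paddr_eq0 // => /andP[/eqP y0 /eqP x0].
by rewrite eA; split; apply: comm_of_spectral_gaps_eq0.
Qed.

Lemma scalar_of_comm_xy n m (x y a : Mat) : Nat.gcd m n.+1 = 1%N ->
  is_mexp n.+1 (mscal (twopi_i_over n.+1) x) (umat n.+1 m) ->
  is_mexp n.+1 (mscal (twopi_i_over n.+1) y) (vmat n.+1) ->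
  toM n.+1 x *m toM n.+1 a = toM n.+1 a *m toM n.+1 x ->
  toM n.+1 y *m toM n.+1 a = toM n.+1 a *m toM n.+1 y ->
  exists c : Cplx, meq n.+1 a (mscal c mid).
Proof.
move=> hg hu hv xa ya; exists (a 0%N 0%N); apply/toM_meq.
rewrite toM_scal toM_mid scalemx1.
have := commutant_umat_vmat hg (mexp_comm xa hu) (mexp_comm ya hv).
by rewrite mxE.
Qed.

Lemma trace_exp_laplacian_scalar n (x y a Ea : Mat) (c : Cplx) :
  meq n a (mscal c mid) -> trace n (mmul n Ea (laplacian n x y a)) = C0.
Proof.
move=> /toM_meq; rewrite toM_scal toM_mid scalemx1 => ea.
apply: toC_inj; rewrite toC_trace toM_mul toM_laplacian ea !double_comm_scalar.
by rewrite addr0 mulmx0 mxtrace0.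
Qed.

End MatrixModel.

Theorem proposition3p1 :
  forall (n m : nat),
    (2 <= n)%nat -> (1 <= m)%nat -> (m <= n - 1)%nat -> Nat.gcd m n = 1%nat ->
  forall x y : Mat,
    hermitian n x -> hermitian n y ->
    is_mexp n (mscal (twopi_i_over n) x) (umat n m) ->
    is_mexp n (mscal (twopi_i_over n) y) (vmat n) ->
  forall a Ea : Mat,
    hermitian n a -> is_mexp n a Ea ->
    im (trace n (mmul n Ea (laplacian n x y a))) = 0 /\
    0 <= re (trace n (mmul n Ea (laplacian n x y a))) /\
    (trace n (mmul n Ea (laplacian n x y a)) = C0 <->
       exists c : Cplx, meq n a (mscal c mid)).
Proof.
  intros n m Hn _ _ Hg x y Hx Hy Hu Hv a Ea Ha HE.
  destruct n as [|n]; [lia|].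
  destruct (MatrixModel.trace_exp_laplacian_spectral Hx Hy Ha HE)
    as [S [ReT [ImT [S_ge0 S0_comm]]]].
  rewrite ReT. split; [exact ImT|]. split; [exact S_ge0|]. split.
  - intros T0. rewrite T0 in ReT. simpl in ReT.
    destruct (S0_comm (eq_sym ReT)) as [xa ya].
    exact (MatrixModel.scalar_of_comm_xy Hg Hu Hv xa ya).
  - intros [c Hc]. exact (MatrixModel.trace_exp_laplacian_scalar x y Ea Hc).
Qed.
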